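(* Let $\mathcal{A}=(u,A,v)$ be a pre-standard admissible linear system of dimension $n\ge 2$, with system matrix $A=(a_{ij})$, whose left family $s=A^{-1}v$ is $\mathbb{K}$-linearly dependent. Let $m\in\{2,3,\ldots,n\}$ be the minimal index such that the left subfamily $(s_m,s_{m+1},\ldots,s_n)$ is $\mathbb{K}$-linearly independent. Then there exist matrices $T,U\in\mathbb{K}^{1\times(n+1-m)}$ such that $$U+(a_{m-1,j})_{j=m}^{n}-T\,(a_{ij})_{i,j=m}^{n}=\begin{bmatrix}0&\cdots&0\end{bmatrix}\quad\text{and}\quad T\,(v_i)_{i=m}^{n}=0,$$ where the first equation holds as an identity of row vectors over $\mathbb{K}\langle X\rangle$.
   Context: $\mathbb{K}$ is a commutative field, $X=\{x_1,\ldots,x_d\}$ a finite alphabet, $\mathbb{K}\langle X\rangle$ the free associative algebra and $\mathbb{K}(\!\langle X\rangle\!)$ its free field (universal field of fractions). A linear representation of $f\in\mathbb{K}(\!\langle X\rangle\!)$ is a triple $(u,A,v)$ with $u\in\mathbb{K}^{1\times n}$, $v\in\mathbb{K}^{n\times 1}$ and full (i.e. invertible over the free field) $A=A_0\otimes 1+\sum_{\ell=1}^d A_\ell\otimes x_\ell$, $A_\ell\in\mathbb{K}^{n\times n}$, with $f=uA^{-1}v$; $n$ is its dimension. It is an admissible linear system (ALS) if $u=e_1=[1,0,\ldots,0]$. The left family is $s=A^{-1}v$ (entries $s_i$). An ALS $(u,A,v)$ of dimension $n$ for a nonzero polynomial $p\in\mathbb{K}\langle X\rangle$ is pre-standard if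 $v=[0,\ldots,0,\lambda]^\top$ for some $\lambda\in\mathbb{K}$ and $A=(a_{ij})$ is upper triangular with $a_{ii}=1$ for all $i$. *)

From HB Require Import structures.
From mathcomp Require Import all_boot all_order all_algebra.
From mathcomp.multinomials Require Import monalg.

Set Implicit Arguments.
Unset Strict Implicit.
Unset Printing Implicit Defensive.

Import GRing.Theory.
Local Open Scope ring_scope.

(* The free associative algebra K<X> on the alphabet X = {x_1,...,x_d},
   realised as the monoid algebra of the free monoid on 'I_d. *)
Definition freeAlg (K : fieldType) (d : nat) := {malg K[{fmonom 'I_d}]}.

(* The letter x_l (l : 'I_d, 0-based) as an element of K<X>. *)
Definition letter (K : fieldType) (d : nat) (l : 'I_d) : freeAlg K d :=
  << fmu l >>.

Definition scal (K : fieldType) (d : nat) (c : K) : freeAlg K d := c%:MP.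

Definition sysmx (K : fieldType) (d n : nat) (A0 : 'M[K]_n)
    (Al : 'I_d -> 'M[K]_n) : 'M[freeAlg K d]_n :=
  \matrix_(i, j) (scal d (A0 i j) + \sum_(l < d) scal d (Al l i j) * letter K l).

(* 1-based access to entries of vectors / matrices by natural-number indices
   (value 0 out of range; only used in range). *)
Definition ent (R : nmodType) (n p : nat) (M : 'M[R]_(n, p)) (i j : nat) : R :=
  match (insub i.-1 : option 'I_n), (insub j.-1 : option 'I_p) with
  | Some i', Some j' => M i' j'
  | _, _ => 0
  end.

Definition cent (R : nmodType) (n : nat) (v : 'cV[R]_n) (i : nat) : R :=
  ent v i 1.

Definition lin_indep (K : fieldType) (V : lmodType K) (k : nat)
    (f : 'I_k -> V) : Prop :=
  forall c : 'I_k -> K, \sum_(j < k) c j *: f j = 0 -> forall j, c j = 0.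

Definition pre_standard (K : fieldType) (d n : nat) (u : 'rV[K]_n)
    (A0 : 'M[K]_n) (Al : 'I_d -> 'M[K]_n) (v : 'cV[K]_n) : Prop :=
  [/\ forall j : 'I_n, u 0 j = (if val j == 0%N then 1 else 0),
      forall i : 'I_n, (i.+1 < n)%N -> v i 0 = 0,
      forall i j : 'I_n, (j < i)%N -> sysmx A0 Al i j = 0
    & forall i : 'I_n, sysmx A0 Al i i = 1].

From HB Require Import structures.
From mathcomp Require Import all_boot all_order all_algebra.
From mathcomp.multinomials Require Import monalg.
From mathcomp Require Import finmap zify.
From Stdlib Require Import Classical.

(* Let f = (s_m, ..., s_n); it is K-linearly independent, whereas by
   minimality of m the family (s_(m-1), f) is not, so s_(m-1) = U f for a
   scalar row U.  Since A is unitriangular and v_(m-1) = 0, row m-1 of A s = v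
   reads (U + a_(m-1,tail)) f = 0 and rows m..n read B f = v_tail, where B is
   the trailing diagonal block of A, whose constant part B_0 is unitriangular.
   With T := (U + constant part of a_(m-1,tail)) B_0^-1 the row pencil
   U + a_(m-1,tail) - T B has no constant part, so applied to f it yields the
   scalar -T v_tail in the form sum_l x_l h_l.  Comparing coefficients in the
   free algebra, such a scalar is 0 and every h_l is 0; independence of f then
   kills the coefficient of each x_l in the row pencil. *)

Set Implicit Arguments.
Unset Strict Implicit.
Unset Printing Implicit Defensive.

Import GRing.Theory.
Local Open Scope ring_scope.

(* [big_split] and friends, restated with [+%R] so that rewriting with them
   keeps the ring notation intact. *)
Lemma sumrD (V : nmodType) (I : Type) (r : seq I) (P : pred I) (F G : I -> V) :
  \sum_(i <- r | P i) (F i + G i) = \sum_(i <- r | P i) F i + \sum_(i <- r | P i) G i.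
Proof. exact: big_split. Qed.

Lemma sumr_split_ord (V : nmodType) m n (F : 'I_(m + n) -> V) :
  \sum_(i < m + n) F i = \sum_(i < m) F (lshift n i) + \sum_(i < n) F (rshift m i).
Proof. exact: big_split_ord. Qed.

Lemma sumr_ord_recr (V : nmodType) n (F : 'I_n.+1 -> V) :
  \sum_(i < n.+1) F i = \sum_(i < n) F (widen_ord (leqnSn n) i) + F ord_max.
Proof. exact: big_ord_recr. Qed.

Section FreeAlgebra.
Variables (K : fieldType) (d : nat).
Local Notation FA := (freeAlg K d).

Lemma mulr_scall (c : K) (a : FA) : scal d c * a = c *: a.
Proof. exact: mul_malgC. Qed.

Lemma mulr_scalr (a : FA) (c : K) : a * scal d c = c *: a.
Proof.
rewrite malgM_def malgZ_def /scal /malgC fgmulgU.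
by apply: eq_bigr => k _; rewrite mulm1 mulrC.
Qed.

Lemma scal_comm (c : K) (a : FA) : scal d c * a = a * scal d c.
Proof. by rewrite mulr_scall mulr_scalr. Qed.

Lemma scal0 : scal d (0 : K) = 0.
Proof. exact: rmorph0. Qed.

Lemma scalB (a b : K) : scal d (a - b) = scal d a - scal d b.
Proof. exact: rmorphB. Qed.

Lemma scalM (a b : K) : scal d (a * b) = scal d a * scal d b.
Proof. exact: rmorphM. Qed.

Lemma scal_sum (I : Type) (r : seq I) (P : pred I) (F : I -> K) :
  scal d (\sum_(i <- r | P i) F i) = \sum_(i <- r | P i) scal d (F i).
Proof. exact: rmorph_sum. Qed.

Lemma map_scal_mulmx m n p (A : 'M[K]_(m, n)) (B : 'M[K]_(n, p)) :
  map_mx (scal d) (A *m B) = map_mx (scal d) A *m map_mx (scal d) B.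
Proof. exact: map_mxM. Qed.

Lemma mcoeff_sum (I : Type) (r : seq I) (P : pred I) (F : I -> FA) w :
  (\sum_(i <- r | P i) F i)@_w = \sum_(i <- r | P i) (F i)@_w.
Proof. exact: raddf_sum. Qed.

Lemma mcoeff_letterM (l l' : 'I_d) (w : {fmonom 'I_d}) (g : FA) :
  (letter K l * g)@_(mmul (fmu l') w) = if l == l' then g@_w else 0.
Proof.
rewrite mcoeffMr.
under eq_bigr do
  rewrite msuppU1 big_seq_fset1 mcoeffU1 eqxx mul1r !fmP !fmM !fmU /= eqseq_cons -fmP.
case: eqP => [_|_]; last by rewrite big1 // => w' _; rewrite andFb mulr0n.
case: (msuppP g w) => [wg|wg].
  rewrite (bigD1_seq w) //= ?eqxx ?mulr1n; last exact: fset_uniq.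
  by rewrite big1 ?addr0 // => w' /negbTE ->; rewrite mulr0n.
rewrite big1_seq // => w' /andP[_ w'g].
by case: eqP w'g wg => [->->|]; rewrite ?mulr0n.
Qed.

Lemma mcoeff1_letterM (l : 'I_d) (g : FA) : (letter K l * g)@_mone = 0.
Proof.
rewrite mcoeffMr.
under eq_bigr do rewrite msuppU1 big_seq_fset1 mcoeffU1 eqxx mul1r fmM_eq1 fm1_eq1.
by rewrite big1 // => w _; rewrite mulr0n.
Qed.

Lemma mcoeff_scal_letterM (c : K) (l : 'I_d) w : (scal d c)@_(mmul (fmu l) w) = 0.
Proof. by rewrite /scal mcoeffC fmM_eq1 fm1_eq1 mulr0n. Qed.

Lemma sum_letterM_eq_scal (h : 'I_d -> FA) (c : K) :
  \sum_l letter K l * h l = scal d c -> (forall l, h l = 0) /\ c = 0.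
Proof.
move=> E; split.
  move=> l; apply/malgP => w; rewrite mcoeff0.
  have := congr1 (mcoeff (mmul (fmu l) w)) E.
  rewrite mcoeff_scal_letterM mcoeff_sum => <-.
  by under eq_bigr do rewrite mcoeff_letterM; rewrite -big_mkcond big_pred1_eq.
have := congr1 (mcoeff mone) E.
by rewrite /scal mcoeffC eqxx mulr1n mcoeff_sum big1 // => l _; rewrite mcoeff1_letterM.
Qed.

(* Locked: unification must never unfold the free-algebra arithmetic inside
   the entries, which is prohibitively slow. *)
Fact pencil_key : unit. Proof. by []. Qed.

Definition pencil p k (P : 'M[K]_(p, k)) (Pl : 'I_d -> 'M[K]_(p, k)) :
    'M[FA]_(p, k) :=
  \matrix[pencil_key]_(i, j)
    (scal d (P i j) + \sum_(l < d) scal d (Pl l i j) * letter K l).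

Lemma pencilE p k (P : 'M[K]_(p, k)) Pl i j :
  pencil P Pl i j = scal d (P i j) + \sum_(l < d) scal d (Pl l i j) * letter K l.
Proof. exact: mxE. Qed.

Lemma sysmx_pencil n (A0 : 'M[K]_n) (Al : 'I_d -> 'M[K]_n) :
  sysmx A0 Al = pencil A0 Al.
Proof. by apply/matrixP => i j; rewrite !mxE. Qed.

Lemma mcoeff1_pencil p k (P : 'M[K]_(p, k)) Pl i j : (pencil P Pl i j)@_mone = P i j.
Proof.
rewrite pencilE mcoeffD /scal mcoeffC eqxx mulr1n raddf_sum big1 ?addr0 //= => l _.
by rewrite mcoeffCM /letter mcoeffU1 fm1_eq1 mulr0.
Qed.

Lemma mxsub_pencil p k p' k' (f : 'I_p' -> 'I_p) (g : 'I_k' -> 'I_k) P Pl :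
  mxsub f g (pencil P Pl) = pencil (mxsub f g P) (fun l => mxsub f g (Pl l)).
Proof.
apply/matrixP => i j; rewrite mxE !pencilE mxE.
by under [in RHS]eq_bigr do rewrite mxE.
Qed.

Lemma pencil_addl p k (U P : 'M[K]_(p, k)) Pl :
  pencil (U + P) Pl = map_mx (scal d) U + pencil P Pl.
Proof.
apply/matrixP => i j; rewrite [RHS]mxE [in RHS]pencilE [LHS]pencilE !mxE.
by rewrite /scal rmorphD addrA.
Qed.

Lemma eq_pencil p k (P : 'M[K]_(p, k)) Pl Ql :
  (forall l, Pl l = Ql l) -> pencil P Pl = pencil P Ql.
Proof.
move=> ePl; apply/matrixP => i j; rewrite [LHS]pencilE [RHS]pencilE.
by under [in LHS]eq_bigr do rewrite ePl.
Qed.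

Lemma map_scal_mul_pencil p q k (T : 'M[K]_(q, p)) (P : 'M[K]_(p, k)) Pl :
  map_mx (scal d) T *m pencil P Pl = pencil (T *m P) (fun l => T *m Pl l).
Proof.
apply/matrixP => i j; rewrite [LHS]mxE [RHS]pencilE [(T *m P) i j]mxE scal_sum.
under [X in _ = X + _]eq_bigr do rewrite scalM.
under [X in _ = _ + X]eq_bigr do rewrite mxE scal_sum mulr_suml.
under [X in _ = _ + X]eq_bigr do under eq_bigr do rewrite scalM -mulrA.
under [in LHS]eq_bigr do rewrite mxE pencilE mulrDr mulr_sumr.
by rewrite sumrD exchange_big.
Qed.

Lemma pencil_mulmxE p k (P : 'M[K]_(p, k)) Pl (f : 'cV[FA]_k) i :
  (pencil P Pl *m f) i 0 =
  \sum_j P i j *: f j 0 + \sum_l letter K l * \sum_j Pl l i j *: f j 0.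
Proof.
under [X in _ = X + _]eq_bigr do rewrite -mulr_scall.
under [X in _ = _ + X]eq_bigr do rewrite mulr_sumr.
under [X in _ = _ + X]eq_bigr do
  under eq_bigr do rewrite -mulr_scall mulrA -scal_comm.
rewrite [LHS]mxE; under [in LHS]eq_bigr do rewrite pencilE mulrDl mulr_suml.
by rewrite sumrD exchange_big.
Qed.

Lemma pencil_mulmx_scal_inj p k (P : 'M[K]_(p, k)) Pl Ql (f : 'cV[FA]_k)
    (c c' : 'cV[K]_p) :
  lin_indep (fun j => f j 0) ->
  pencil P Pl *m f = map_mx (scal d) c -> pencil P Ql *m f = map_mx (scal d) c' ->
  (forall l, Pl l = Ql l) /\ c = c'.
Proof.
move=> f_indep ePl eQl.
have E i : \sum_l letter K l * \sum_j (Pl l i j - Ql l i j) *: f j 0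
           = scal d (c i 0 - c' i 0).
  move/matrixP/(_ i 0): ePl; rewrite pencil_mulmxE mxE => eP.
  move/matrixP/(_ i 0): eQl; rewrite pencil_mulmxE mxE => eQ.
  rewrite scalB -eP -eQ opprD addrACA subrr add0r -sumrB.
  under [in LHS]eq_bigr do under eq_bigr do rewrite scalerBl.
  by under [in LHS]eq_bigr do rewrite sumrB mulrBr.
split.
  move=> l; apply/matrixP => i j; apply/eqP; rewrite -subr_eq0; apply/eqP.
  by case: (sum_letterM_eq_scal (E i)) => /(_ l) /f_indep.
apply/colP => i; apply/eqP; rewrite -subr_eq0; apply/eqP.
by case: (sum_letterM_eq_scal (E i)).
Qed.

Lemma pencil_relation_rowspace p k (G : 'M[K]_(p, k)) Gl (B0 : 'M[K]_k) Bl
    (f : 'cV[FA]_k) (w : 'cV[K]_k) :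
  lin_indep (fun j => f j 0) -> B0 \in unitmx ->
  pencil G Gl *m f = 0 -> pencil B0 Bl *m f = map_mx (scal d) w ->
  exists T : 'M[K]_(p, k),
    map_mx (scal d) T *m pencil B0 Bl = pencil G Gl /\ T *m w = 0.
Proof.
move=> f_indep B0_unit Gf Bf.
pose T := G *m invmx B0.
have TB0 : T *m B0 = G by rewrite mulmxKV.
have TBf : pencil G (fun l => T *m Bl l) *m f = map_mx (scal d) (T *m w).
  by rewrite -[in LHS]TB0 -map_scal_mul_pencil -mulmxA Bf map_scal_mulmx.
have Gf0 : pencil G Gl *m f = map_mx (scal d) 0 by rewrite Gf; exact/esym/map_mx0.
(* T B and G have the same constant part, so only the letter parts can differ. *)
have [eGl Tw] := pencil_mulmx_scal_inj f_indep Gf0 TBf.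
exists T; split; last by rewrite -Tw.
by rewrite map_scal_mul_pencil TB0; apply: eq_pencil => l; rewrite eGl.
Qed.

End FreeAlgebra.

Section LinearIndependence.
Variables (K : fieldType) (V : lmodType K).

Lemma eq_lin_indep k (F G : 'I_k -> V) :
  (forall j, F j = G j) -> lin_indep F -> lin_indep G.
Proof.
by move=> eFG F_indep c Gc; apply: F_indep; under eq_bigr do rewrite eFG.
Qed.

Lemma lin_indep_cast k k' (F : nat -> V) :
  k = k' -> lin_indep (fun j : 'I_k => F j) -> lin_indep (fun j : 'I_k' => F j).
Proof. by move <-. Qed.

Lemma lin_dep_lift0 k (F : 'I_k.+1 -> V) :
  ~ lin_indep F -> lin_indep (fun j => F (lift ord0 j)) ->
  exists mu : 'I_k -> K, F ord0 = \sum_j mu j *: F (lift ord0 j).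
Proof.
move=> F_dep tail_indep.
have [c [Fc [j cj]]] : exists c : 'I_k.+1 -> K,
    \sum_j c j *: F j = 0 /\ exists j, c j != 0.
  apply: NNPP => no_rel; apply: F_dep => c Fc j; apply: NNPP => cj.
  by apply: no_rel; exists c; split => //; exists j; apply/eqP.
rewrite big_ord_recl in Fc.
have c0 : c ord0 != 0.
  apply/eqP => c0; move/eqP: cj; apply.
  move: Fc; rewrite c0 scale0r add0r => /tail_indep tail0.
  by case: (unliftP ord0 j) => [j'|] ->.
exists (fun j => - ((c ord0)^-1 * c (lift ord0 j))).
rewrite -[F ord0]scale1r -(mulVf c0) -scalerA.
move/eqP: Fc; rewrite addr_eq0 => /eqP ->.
rewrite scalerN scaler_sumr -sumrN; apply: eq_bigr => i _.
by rewrite scalerA scaleNr.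
Qed.

Lemma tail_dep_of_minimal q k (F : nat -> V) :
  ~ lin_indep (fun j : 'I_(q.+1 + k) => F j.+1) ->
  (forall k', (2 <= k' < q.+2)%N ->
     ~ lin_indep (fun j : 'I_((q.+1 + k).+1 - k') => F (k' + j))) ->
  ~ lin_indep (fun j : 'I_k.+1 => F (q.+1 + j)).
Proof.
move=> all_dep min_dep /(lin_indep_cast (F := fun x => F (q.+1 + x))) F_cast.
have [q0 | q_gt0] := posnP q; first by subst q; apply: all_dep; exact: F_cast.
have k_eq : k.+1 = ((q.+1 + k).+1 - q.+1)%N by lia.
by apply: (min_dep q.+1 _ (F_cast _ k_eq)); lia.
Qed.

End LinearIndependence.

Lemma entE (R : nmodType) n p (M : 'M[R]_(n, p)) (i : 'I_n) (j : 'I_p) a b :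
  a = i.+1 -> b = j.+1 -> ent M a b = M i j.
Proof. by move=> -> ->; rewrite /ent /= !valK. Qed.

Section PreStandardSplit.
Variables (K : fieldType) (d q k : nat).
Variables (A0 : 'M[K]_(q.+1 + k)) (Al : 'I_d -> 'M[K]_(q.+1 + k)).
Variables (v : 'cV[K]_(q.+1 + k)) (s : 'cV[freeAlg K d]_(q.+1 + k)).
Hypothesis A_lower0 : forall i j : 'I_(q.+1 + k), (j < i)%N -> pencil A0 Al i j = 0.
Hypothesis A_diag1 : forall i, pencil A0 Al i i = 1.
Hypothesis As : pencil A0 Al *m s = map_mx (scal d) v.

(* With m = q + 2, [r0] is the 0-based index of row m-1 and [rs j] that of
   s_(m+j). *)
Local Notation r0 := (lshift k (@ord_max q)).
Local Notation rs := (@rshift q.+1 k).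

Lemma tail_block_unitmx : mxsub rs rs A0 \in unitmx.
Proof.
have A0E i j : A0 i j = (pencil A0 Al i j)@_mone by rewrite mcoeff1_pencil.
rewrite unitmxE -det_tr det_trig.
  by rewrite big1 ?unitr1 // => i _; rewrite !mxE A0E A_diag1 mcoeff1 eqxx.
apply/is_trig_mxP => i j ij; rewrite !mxE A0E A_lower0 ?mcoeff0 //.
by rewrite /= ltn_add2l.
Qed.

Lemma tail_equations :
  mxsub rs rs (pencil A0 Al) *m rowsub rs s = map_mx (scal d) (rowsub rs v).
Proof.
apply/colP => i; move/colP/(_ (rs i)): As.
rewrite [LHS]mxE sumr_split_ord big1 => [|j _]; last first.
  by rewrite A_lower0 ?mul0r //= (leq_trans (ltn_ord j)) ?leq_addr.
rewrite add0r mxE => As_i; rewrite [RHS]mxE [rowsub rs v i 0]mxE -As_i.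
by rewrite [LHS]mxE; apply: eq_bigr => j _; rewrite ![mxsub _ _ _ _ _]mxE.
Qed.

Hypothesis v_r0 : v r0 0 = 0.

Lemma pivot_equation :
  s r0 0 + (mxsub (fun _ : 'I_1 => r0) rs (pencil A0 Al) *m rowsub rs s) 0 0 = 0.
Proof.
move/colP/(_ r0): As; rewrite [RHS]mxE v_r0 scal0.
rewrite [LHS]mxE sumr_split_ord sumr_ord_recr big1 => [|j _]; last first.
  by rewrite A_lower0 ?mul0r //= ltn_ord.
rewrite add0r A_diag1 mul1r => <-; apply: (congr1 (+%R (s r0 0))).
by rewrite [LHS]mxE; apply: eq_bigr => j _; rewrite ![mxsub _ _ _ _ _]mxE.
Qed.

Lemma pivot_row_relation (mu : 'rV[K]_k) :
  lin_indep (fun j => s (rs j) 0) -> s r0 0 = \sum_j mu 0 j *: s (rs j) 0 ->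
  exists T : 'rV[K]_k,
    map_mx (scal d) mu + mxsub (fun _ : 'I_1 => r0) rs (pencil A0 Al)
      - map_mx (scal d) T *m mxsub rs rs (pencil A0 Al) = 0
    /\ T *m rowsub rs v = 0.
Proof.
move=> tail_indep pivot_comb.
have f_indep : lin_indep (fun j => rowsub rs s j 0).
  by apply: eq_lin_indep tail_indep => j; rewrite mxE.
have mu_f : (map_mx (scal d) mu *m rowsub rs s) 0 0 = s r0 0.
  rewrite pivot_comb [LHS]mxE; apply: eq_bigr => j _.
  by rewrite [map_mx _ _ _ _]mxE [mxsub _ _ _ _ _]mxE mulr_scall.
have pivot_eq : pencil (mu + mxsub (fun _ : 'I_1 => r0) rs A0)
    (fun l => mxsub (fun _ : 'I_1 => r0) rs (Al l)) *m rowsub rs s = 0.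
  rewrite pencil_addl mulmxDl -mxsub_pencil; apply/rowP => i.
  rewrite ord1 [RHS]mxE [LHS]mxE [X in X + _]mu_f; exact: pivot_equation.
have tail_eq : pencil (mxsub rs rs A0) (fun l => mxsub rs rs (Al l)) *m rowsub rs s
    = map_mx (scal d) (rowsub rs v) by rewrite -mxsub_pencil tail_equations.
have [T [TB Tv]] :=
  pencil_relation_rowspace f_indep tail_block_unitmx pivot_eq tail_eq.
exists T; split => //.
by rewrite !mxsub_pencil TB pencil_addl subrr.
Qed.

End PreStandardSplit.

Section OneBasedBlocks.
Variables (R : nmodType) (q k : nat).

Lemma ent_pivot_row (M : 'M[R]_(q.+1 + k)) :
  \row_(j < k) ent M q.+1 (q.+2 + j)
  = mxsub (fun _ : 'I_1 => lshift k (@ord_max q)) (@rshift q.+1 k) M.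
Proof. by apply/matrixP => i j; rewrite !mxE; apply: entE. Qed.

Lemma ent_tail_block (M : 'M[R]_(q.+1 + k)) :
  \matrix_(i < k, j < k) ent M (q.+2 + i) (q.+2 + j)
  = mxsub (@rshift q.+1 k) (@rshift q.+1 k) M.
Proof. by apply/matrixP => i j; rewrite !mxE; apply: entE. Qed.

Lemma cent_tail_col (v : 'cV[R]_(q.+1 + k)) :
  \col_(i < k) cent v (q.+2 + i) = rowsub (@rshift q.+1 k) v.
Proof. by apply/matrixP => i j; rewrite !mxE ord1; apply: entE. Qed.

End OneBasedBlocks.

Theorem lemma2p5 (K : fieldType) (d n : nat) (u : 'rV[K]_n) (A0 : 'M[K]_n)
    (Al : 'I_d -> 'M[K]_n) (v : 'cV[K]_n) (s : 'cV[freeAlg K d]_n) (m : nat) :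
  (2 <= n)%N ->
  pre_standard u A0 Al v ->
  (* s is the left family: A s = v over K<X> *)
  sysmx A0 Al *m s = map_mx (scal d) v ->
  (* the ALS represents a nonzero polynomial p = u A^{-1} v = s_1 *)
  cent s 1 != 0 ->
  (* the left family is K-linearly dependent *)
  ~ lin_indep (fun i : 'I_n => s i 0) ->
  (* m in {2,...,n} minimal such that (s_m,...,s_n) is K-linearly independent *)
  (2 <= m <= n)%N ->
  lin_indep (fun j : 'I_(n.+1 - m) => cent s (m + j)) ->
  (forall k : nat, (2 <= k < m)%N ->
     ~ lin_indep (fun j : 'I_(n.+1 - k) => cent s (k + j))) ->
  exists T U : 'rV[K]_(n.+1 - m),
    map_mx (scal d) U
      + \row_(j < n.+1 - m) ent (sysmx A0 Al) m.-1 (m + j)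
      - map_mx (scal d) T
          *m \matrix_(i < n.+1 - m, j < n.+1 - m) ent (sysmx A0 Al) (m + i) (m + j)
      = 0
    /\ T *m (\col_(i < n.+1 - m) cent v (m + i)) = 0.
Proof.
move=> _ [_ v_top A_lower0 A_diag1] As _ s_dep /andP[m_ge2 m_le_n] tail_indep m_min.
case: m m_ge2 m_le_n tail_indep m_min => [|[|q]] // _ m_le_n tail_indep m_min.
set k := (n.+1 - q.+2)%N in tail_indep m_min *.
have n_eq : n = (q.+1 + k)%N by rewrite /k; lia.
have k_gt0 : (0 < k)%N by rewrite /k; lia.
clearbody k; subst n; rewrite sysmx_pencil in A_lower0 A_diag1 As *.
have v_r0 : v (lshift k ord_max) 0 = 0 by apply: v_top; rewrite /=; lia.
have tail_indep' : lin_indep (fun j => s (rshift q.+1 j) 0).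
  by apply: eq_lin_indep tail_indep => j; apply: entE.
have pivot_dep : ~ lin_indep (fun j : 'I_k.+1 => cent s (q.+1 + j)).
  apply: tail_dep_of_minimal m_min => dep; apply: s_dep.
  by apply: eq_lin_indep dep => j; apply: entE.
have s_tail j : cent s (q.+1 + lift ord0 j) = s (rshift q.+1 j) 0.
  by apply: entE => //; rewrite lift0 addnS.
have s_pivot : cent s (q.+1 + @ord0 k) = s (lshift k ord_max) 0.
  by apply: entE => //; rewrite addn0.
have [mu pivot_comb] :=
  lin_dep_lift0 pivot_dep (eq_lin_indep (fun j => esym (s_tail j)) tail_indep').
have [|T [TU Tv]] :=
  pivot_row_relation A_lower0 A_diag1 As v_r0 (mu := \row_j mu j) tail_indep'.
  by rewrite -s_pivot pivot_comb; apply: eq_bigr => j _; rewrite mxE s_tail.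
exists T, (\row_j mu j).
by rewrite ent_pivot_row ent_tail_block cent_tail_col.
Qed.
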